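(* Let $M$ be a finite monoid. The map sending a two-sided idempotent ideal $I$ of $M$ to the set of $\mathfrak I$-classes of idempotents lying in $I$ is a bijection $\mathscr{II}(M)\to\mathsf{Open}(\mathsf{Idem}_{\mathfrak I}(M))$, where $\mathsf{Idem}_{\mathfrak I}(M)$ carries the order topology of the order $\le_{\mathfrak I}$. Via $\mathsf F_M\cong\mathsf{Idem}_{\mathfrak I}(M)$ this gives a bijection between $\mathscr{II}(M)$ (hence between localising subcategories of the topos of right $M$-sets) and the open subsets of $\mathsf F_M$.
   Context: A two-sided ideal $I$ (possibly empty) is idempotent if $I=I^2=\{xy\mid x,y\in I\}$; $\mathscr{II}(M)$ is the set of these. For idempotents $e,f$: $e\,\mathfrak I\,f$ iff $MeM=MfM$, and $\mathsf{Idem}_{\mathfrak I}(M)$ is the set of $\mathfrak I$-classes of idempotents, partially ordered by $[e]\le_{\mathfrak I}[f]$ iff $MeM\subseteq MfM$. For a poset $P$, the order topology has as open sets the subsets $S\subseteq P$ such that $y\in S$ and $x\le y$ imply $x\in S$; $\mathsf{Open}(P)$ is the set of open subsets. $\mathsf F_M$ is the set of isomorphism classes of points of the topos of right $M$-sets, which is in bijection with $\mathsf{Idem}_{\mathfrak I}(M)$ via $[Me]\leftrightarrow[e]$. *)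

From mathcomp Require Import all_boot.
Set Implicit Arguments. Unset Strict Implicit. Unset Printing Implicit Defensive.

(* A finite monoid is given by a finType T, a multiplication mul and a unit;
   the monoid axioms are hypotheses of the theorem. *)
Section FinMonoidDefs.
Variables (T : finType) (mul : T -> T -> T).

Definition idem (e : T) : bool := mul e e == e.

Definition pideal (e : T) : {set T} := [set mul (mul m e) n | m : T, n : T].

(* two-sided ideal (possibly empty): M I ⊆ I and I M ⊆ I *)
Definition is_ideal (I : {set T}) : Prop :=
  forall m x, x \in I -> mul m x \in I /\ mul x m \in I.

Definition sqset (I : {set T}) : {set T} := [set mul x y | x in I, y in I].

Definition idem_ideal (I : {set T}) : Prop := is_ideal I /\ I = sqset I.

Definition Jclass (e : T) : {set T} := [set f | idem f && (pideal f == pideal e)].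

Definition IdemJ : {set {set T}} := [set Jclass e | e in [set e | idem e]].

Definition leJ (C D : {set T}) : Prop :=
  exists e f, [/\ idem e, idem f, C = Jclass e, D = Jclass f & pideal e \subset pideal f].

(* open sets of the order (Alexandrov) topology: down-closed subsets *)
Definition is_open (S : {set {set T}}) : Prop :=
  S \subset IdemJ /\
  forall C D, D \in S -> C \in IdemJ -> leJ C D -> C \in S.

Definition idem_classes (I : {set T}) : {set {set T}} :=
  [set Jclass e | e in [set e in I | idem e]].

End FinMonoidDefs.

From mathcomp Require Import all_boot zify.
Set Implicit Arguments. Unset Strict Implicit. Unset Printing Implicit Defensive.

(* The whole argument rests on one structural fact: in a finite monoid every
   element x of an idempotent ideal I lies in M e M for some idempotent e of I
   (lemma [idem_ideal_covered]).  Its proof picks z in I with x in z M and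
   z M of maximal size; writing z = z' y' with z', y' in I (as I = I^2) forces
   z M = z' M, whence z = z s for some s in I, hence z = z e for the
   idempotent power e of s (every element of a finite semigroup has one).

   Consequently an idempotent ideal is the union of the M e M over the
   idempotents e it contains, so it is determined by its J-classes
   (injectivity); the J-classes of an ideal form a down-set since M e M is
   the least ideal containing e (openness); and conversely the union of the
   M e M over the classes of a down-set S is an idempotent ideal whose classes
   are exactly S (surjectivity). *)

Section FiniteMonoid.
Variables (T : finType) (mul : T -> T -> T) (one : T).
Hypothesis mulA : forall x y z, mul x (mul y z) = mul (mul x y) z.
Hypothesis mul1x : forall x, mul one x = x.
Hypothesis mulx1 : forall x, mul x one = x.

(* Semigroup powers: [spow s n] is s^(n+1); no unit is involved, so powers of
   an element of an ideal stay in the ideal. *)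
Definition spow (s : T) (n : nat) : T := iter n (mul s) s.

Lemma spowD s a b : spow s (a + b).+1 = mul (spow s a) (spow s b).
Proof. by elim: a => [|a IH] //; rewrite addSn /= -mulA -IH. Qed.

(* Pigeonhole: among the #|T|+1 powers s^1, ..., s^(#|T|+1) two coincide. *)
Lemma spow_repeat s : exists a d, 0 < d /\ spow s a = spow s (a + d).
Proof.
pose f (i : 'I_#|T|.+1) := spow s i.
have /existsP [i /existsP [j /andP [neq_ij /eqP fij]]] :
    [exists i, exists j, (i != j) && (f i == f j)].
  apply: contraT => /existsPn noncoll.
  have inj_f : injective f.
    move=> i j fij; apply/eqP/negPn/negP => neq_ij.
    by move/existsPn/(_ j): (noncoll i); rewrite neq_ij fij eqxx.
  by move: (leq_card f inj_f); rewrite card_ord ltnn.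
case: (ltngtP i j) neq_ij => [lt_ij|lt_ji|/val_inj ->]; last by rewrite eqxx.
- by exists i, (j - i); rewrite subn_gt0 subnKC ?(ltnW lt_ij).
- by exists j, (i - j); rewrite subn_gt0 subnKC ?(ltnW lt_ji).
Qed.

Lemma spow_periodic s a d :
  spow s a = spow s (a + d) -> forall t q, spow s (a + t) = spow s (a + t + q * d).
Proof.
move=> rep t; elim=> [|q IH]; first by rewrite mul0n addn0.
rewrite IH mulSn.
have -> : a + t + (d + q * d) = (t + q * d) + (a + d) by lia.
by rewrite /spow in rep *; rewrite [RHS]iterD -rep -iterD; congr iter; lia.
Qed.

Lemma spow_idempotent s : exists k, idem mul (spow s k).
Proof.
have [a [d [d_gt0 rep]]] := spow_repeat s.
exists (a.+1 * d).-1; apply/eqP; rewrite -spowD.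
have lt_a : a < a.+1 * d by nia.
have -> : ((a.+1 * d).-1 + (a.+1 * d).-1).+1
          = a + ((a.+1 * d).-1 - a) + a.+1 * d by lia.
by rewrite -spow_periodic //; congr spow; lia.
Qed.

Lemma fixed_by_spow z s : z = mul z s -> forall n, z = mul z (spow s n).
Proof. by move=> zs; elim=> [|n IH] //=; rewrite mulA -zs. Qed.

Lemma spow_in_ideal I s : is_ideal mul I -> s \in I -> forall n, spow s n \in I.
Proof. by move=> idealI sI; elim=> //= n IH; case: (idealI s _ IH). Qed.

Lemma pidealP e x :
  reflect (exists m n, x = mul (mul m e) n) (x \in pideal mul e).
Proof.
apply: (iffP imset2P) => [[m n _ _ ->]|[m [n ->]]]; first by exists m, n.
by exists m n.
Qed.

Lemma pideal_self e : e \in pideal mul e.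
Proof. by apply/pidealP; exists one, one; rewrite mul1x mulx1. Qed.

Lemma pideal_ideal e : is_ideal mul (pideal mul e).
Proof.
move=> m x /pidealP [a [b ->]]; split; apply/pidealP.
- by exists (mul m a), b; rewrite !mulA.
- by exists a, (mul b m); rewrite !mulA.
Qed.

Lemma pideal_sub I e : is_ideal mul I -> e \in I -> pideal mul e \subset I.
Proof.
move=> idealI eI; apply/subsetP => x /pidealP [m [n ->]].
by case: (idealI m e eI) => meI _; case: (idealI n _ meI).
Qed.

Lemma pideal_le x e : x \in pideal mul e -> pideal mul x \subset pideal mul e.
Proof. exact/pideal_sub/pideal_ideal. Qed.

(* The J-class of an idempotent e is among the classes of an ideal I exactly
   when e itself lies in I: J-equivalent idempotents generate the same
   principal ideal. *)
Lemma Jclass_in_classes I e :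
  is_ideal mul I -> idem mul e -> (Jclass mul e \in idem_classes mul I) = (e \in I).
Proof.
move=> idealI ide; apply/imsetP/idP => [[f]|eI]; last by exists e; rewrite ?inE ?eI.
rewrite inE => /andP [fI _] Jef.
have : e \in Jclass mul f by rewrite -Jef inE ide eqxx.
rewrite inE => /andP [_ /eqP pef].
by apply: (subsetP (pideal_sub idealI fI)); rewrite -pef pideal_self.
Qed.

Lemma right_fixed_factor I x : idem_ideal mul I -> x \in I ->
  exists z s w, [/\ s \in I, x = mul z w & z = mul z s].
Proof.
case=> idealI sqI xI.
pose P z := (z \in I) && [exists w, x == mul z w].
have Px : P x by rewrite /P xI; apply/existsP; exists one; rewrite mulx1.
pose zM z := [set mul z m | m : T].
case: (arg_maxnP (fun z => #|zM z|) Px) => z /andP [zI /existsP [w /eqP xzw]] zmax.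
have : z \in sqset mul I by rewrite -sqI.
case/imset2P => z' y' z'I y'I zE.
have Pz' : P z'.
  by rewrite /P z'I; apply/existsP; exists (mul y' w); rewrite xzw zE mulA.
have sub_zM : zM z \subset zM z'.
  apply/subsetP => u /imsetP [m _ ->]; apply/imsetP; exists (mul y' m) => //.
  by rewrite zE mulA.
have eq_zM : zM z = zM z' by apply/eqP; rewrite eqEcard sub_zM; exact: zmax.
have : z' \in zM z by rewrite eq_zM; apply/imsetP; exists one; rewrite ?mulx1.
case/imsetP => t _ z'E.
exists z, (mul t y'), w; split => //; first by case: (idealI t y' y'I).
by rewrite mulA -z'E zE.
Qed.

Lemma idem_ideal_covered I x : idem_ideal mul I -> x \in I ->
  exists e, [/\ e \in I, idem mul e & x \in pideal mul e].
Proof.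
move=> idemI xI; have [idealI _] := idemI.
have [z [s [w [sI -> zs]]]] := right_fixed_factor idemI xI.
have [k idk] := spow_idempotent s.
exists (spow s k); split => //; first exact: spow_in_ideal.
by apply/pidealP; exists z, w; rewrite -fixed_by_spow.
Qed.

Lemma idem_classes_sub I J : idem_ideal mul I -> idem_ideal mul J ->
  idem_classes mul I = idem_classes mul J -> I \subset J.
Proof.
move=> idemI [idealJ _] sameJ; have [idealI _] := idemI.
apply/subsetP => x xI.
have [e [eI ide xe]] := idem_ideal_covered idemI xI.
have : Jclass mul e \in idem_classes mul J.
  by rewrite -sameJ Jclass_in_classes.
rewrite Jclass_in_classes // => eJ.
exact: subsetP (pideal_sub idealJ eJ) x xe.
Qed.

Lemma idem_classes_open I : idem_ideal mul I -> is_open mul (idem_classes mul I).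
Proof.
case=> idealI _; split.
  apply/subsetP => C /imsetP [e]; rewrite inE => /andP [_ ide] ->.
  by apply/imsetP; exists e; rewrite ?inE.
move=> C D DI _ [e [f [ide idf -> DE sub_ef]]].
move: DI; rewrite DE !Jclass_in_classes // => fI.
by apply: (subsetP (pideal_sub idealI fI)); apply: (subsetP sub_ef); apply: pideal_self.
Qed.

Definition ideal_of_classes (S : {set {set T}}) : {set T} :=
  [set x | [exists e, [&& idem mul e, Jclass mul e \in S & x \in pideal mul e]]].

Lemma ideal_of_classesP (S : {set {set T}}) x :
  reflect (exists e, [/\ idem mul e, Jclass mul e \in S & x \in pideal mul e])
          (x \in ideal_of_classes S).
Proof.
rewrite inE; apply: (iffP existsP) => [[e /and3P [? ? ?]]|[e [? ? ?]]]; exists e => //.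
by apply/and3P.
Qed.

Lemma ideal_of_classes_ideal (S : {set {set T}}) : is_ideal mul (ideal_of_classes S).
Proof.
move=> m x /ideal_of_classesP [e [ide eS xe]].
by case: (pideal_ideal m xe) => mx xm; split; apply/ideal_of_classesP; exists e.
Qed.

(* It is idempotent: m e n = (m e) (e n) with both factors in M e M. *)
Lemma ideal_of_classes_idem (S : {set {set T}}) : idem_ideal mul (ideal_of_classes S).
Proof.
split; first exact: ideal_of_classes_ideal.
apply/eqP; rewrite eqEsubset; apply/andP; split; apply/subsetP.
- move=> x /ideal_of_classesP [e [ide eS /pidealP [m [n ->]]]].
  apply/imset2P; exists (mul m e) (mul e n).
  + by apply/ideal_of_classesP; exists e; split=> //; apply/pidealP; exists m, one; rewrite mulx1.
  + by apply/ideal_of_classesP; exists e; split=> //; apply/pidealP; exists one, n; rewrite mul1x.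
  + by rewrite mulA -(mulA m e e) (eqP ide).
- move=> u /imset2P [x y xI _ ->].
  by case: (ideal_of_classes_ideal y xI).
Qed.

Lemma classes_of_ideal_of_classes (S : {set {set T}}) :
  is_open mul S -> idem_classes mul (ideal_of_classes S) = S.
Proof.
case=> subS downS; apply/eqP; rewrite eqEsubset; apply/andP; split; apply/subsetP.
- move=> C /imsetP [e']; rewrite inE => /andP [/ideal_of_classesP [e [ide eS e'e]] ide'] ->.
  apply: (downS _ (Jclass mul e)) => //; first by apply/imsetP; exists e'; rewrite ?inE.
  by exists e', e; split => //; apply: pideal_le.
- move=> C CS; case/imsetP: (subsetP subS C CS) => e; rewrite inE => ide CE.
  have idealS := @ideal_of_classes_ideal S.
  rewrite CE Jclass_in_classes //.
  by apply/ideal_of_classesP; exists e; rewrite -CE pideal_self.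
Qed.

End FiniteMonoid.

Theorem proposition4p10 (T : finType) (mul : T -> T -> T) (one : T)
  (mulA : forall x y z, mul x (mul y z) = mul (mul x y) z)
  (mul1x : forall x, mul one x = x) (mulx1 : forall x, mul x one = x) :
  (forall I, idem_ideal mul I -> is_open mul (idem_classes mul I)) /\
  (forall I J, idem_ideal mul I -> idem_ideal mul J ->
     idem_classes mul I = idem_classes mul J -> I = J) /\
  (forall S, is_open mul S -> exists I, idem_ideal mul I /\ idem_classes mul I = S).
Proof.
split; [|split].
- exact: idem_classes_open.
- move=> I J idemI idemJ sameJ; apply/eqP; rewrite eqEsubset.
  by rewrite !(idem_classes_sub mulA mul1x mulx1) //.
- move=> S openS; exists (ideal_of_classes mul S); split.
  + exact: ideal_of_classes_idem.
  + exact: classes_of_ideal_of_classes.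
Qed.
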